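(* Let $X_1,\dots,X_n$ be i.i.d. sub-Gaussian random vectors in $\mathbb{R}^d$ with mean zero, covariance $I$ and $O(1)$ sub-Gaussian constant, and let $\nabla^2L_n(\alpha)=\sum_{i=1}^n\beta_i(\alpha)X_iX_i^\top$ with $\beta_i(\alpha)=\sigma(\langle\alpha,X_i\rangle)(1-\sigma(\langle\alpha,X_i\rangle))$. Then for every $\alpha\in\mathbb{R}^d$, $\mathbb{E}\nabla^2L_n(\alpha)\succeq n\cdot e^{-O(\|\alpha\|_2)}\cdot I$.
   Context: $\sigma(z)=1/(1+e^{-z})$; the constant in $O(\cdot)$ depends only on the sub-Gaussian constant. *)

From HB Require Import structures.
From mathcomp Require Import all_boot all_order all_algebra.
From mathcomp Require Import all_classical all_reals all_analysis.

Unset Printing Implicit Defensive.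

Import Order.TTheory GRing.Theory Num.Theory.
Local Open Scope classical_set_scope.
Local Open Scope ring_scope.

Definition sigmoid {R : realType} (z : R) : R := 1 / (1 + expR (- z)).

Definition dotv {R : realType} {d : nat} (u v : 'I_d -> R) : R :=
  \sum_(j < d) u j * v j.
Definition norm2 {R : realType} {d : nat} (u : 'I_d -> R) : R :=
  Num.sqrt (dotv u u).

Definition psd {R : realType} {d : nat} (A : 'M[R]_d) : Prop :=
  forall v : 'I_d -> R, 0 <= \sum_(j < d) \sum_(k < d) v j * A j k * v k.
Definition loewner_ge {R : realType} {d : nat} (A B : 'M[R]_d) : Prop :=
  psd (A - B).

(** Borel sigma-algebra of R^d = product sigma-algebra, generated by the
    coordinate preimages of Borel sets of R. *)
Definition coord_cylinders {R : realType} (d : nat) : set (set ('I_d -> R)) :=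
  [set A | exists (j : 'I_d) (B : set R), measurable B /\
           A = (fun x : 'I_d -> R => x j) @^-1` B].
Definition borelRd {R : realType} (d : nat) : set (set ('I_d -> R)) :=
  <<s (coord_cylinders d) >>.

Section random_vectors.
Context {dT : measure_display} {T : measurableType dT} {R : realType}.

Definition random_vector {d : nat} (X : T -> 'I_d -> R) : Prop :=
  forall j : 'I_d, measurable_fun setT (fun w => X w j).

Definition independent_rvecs (P : probability T R) {n d : nat}
    (X : 'I_n -> T -> 'I_d -> R) : Prop :=
  forall A : 'I_n -> set T,
    (forall i, exists2 B, borelRd d B & A i = X i @^-1` B) ->
    (P (\bigcap_(i in [set: 'I_n]) A i) = \prod_(i < n) P (A i))%E.

Definition identically_distributed (P : probability T R) {n d : nat}
    (X : 'I_n -> T -> 'I_d -> R) : Prop :=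
  forall (i i' : 'I_n) (B : set ('I_d -> R)), borelRd d B ->
    P (X i @^-1` B) = P (X i' @^-1` B).

Definition iid_rvecs (P : probability T R) {n d : nat}
    (X : 'I_n -> T -> 'I_d -> R) : Prop :=
  (forall i, random_vector (X i)) /\ independent_rvecs P X /\
  identically_distributed P X.

Definition mean_zero (P : probability T R) {d : nat} (Y : T -> 'I_d -> R) :=
  forall j : 'I_d, ('E_P[fun w => Y w j] = 0)%E.

(** covariance identity: E[Y Y^T] = I (together with mean zero) *)
Definition cov_identity (P : probability T R) {d : nat} (Y : T -> 'I_d -> R) :=
  forall j k : 'I_d, ('E_P[fun w => (Y w j * Y w k)%R] = ((j == k)%:R)%:E)%E.

(** sub-Gaussian with constant K (psi_2 norm of every one-dimensional
    marginal <u,Y>, |u|=1, is at most K):  E exp(<u,Y>^2/K^2) <= 2 *)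
Definition subgaussian (P : probability T R) {d : nat} (K : R)
    (Y : T -> 'I_d -> R) : Prop :=
  forall u : 'I_d -> R, norm2 u = 1 ->
    ('E_P[fun w => (expR ((dotv u (Y w)) ^+ 2 / K ^+ 2))%R] <= 2%:E)%E.

Definition beta_weight {d : nat} (alpha x : 'I_d -> R) : R :=
  sigmoid (dotv alpha x) * (1 - sigmoid (dotv alpha x)).

Definition hessian_Ln {n d : nat} (X : 'I_n -> T -> 'I_d -> R)
    (alpha : 'I_d -> R) (w : T) : 'M[R]_d :=
  \matrix_(j, k) \sum_(i < n) beta_weight alpha (X i w) * X i w j * X i w k.

Definition expected_hessian (P : probability T R) {n d : nat}
    (X : 'I_n -> T -> 'I_d -> R) (alpha : 'I_d -> R) : 'M[R]_d :=
  \matrix_(j, k) fine ('E_P[fun w => hessian_Ln X alpha w j k]).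

End random_vectors.

From HB Require Import structures.
From mathcomp Require Import all_boot all_order all_algebra.
From mathcomp Require Import all_classical all_reals all_analysis.
From mathcomp Require Import measurable_realfun ring lra.

(* Put M := 4 K^2, s := |alpha|, a := <alpha/s, X> and
   b := <v/|v|, X>.  Where |a| <= M, beta(s a) >= e^{-M s}/4; where |a| > M,
   b^2 <= (b^4 + a^4)/(2 M^2).  Hence pointwise
     beta(s a) b^2 >= e^{-M s}/4 * (b^2 - (b^4 + a^4)/(2 M^2)),
   and taking expectations with E b^2 = 1 (identity covariance) and
   E a^4, E b^4 <= 8 K^4 = M^2/2 (from y^4 <= 4 K^4 exp(y^2/K^2) and the
   sub-Gaussian bound) gives E[beta(<alpha,X>) <v,X>^2] >= |v|^2 e^{-M s}/8. *)

Set Implicit Arguments.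
Unset Strict Implicit.
Unset Printing Implicit Defensive.

Import Order.TTheory GRing.Theory Num.Theory numFieldNormedType.Exports.
Local Open Scope classical_set_scope.
Local Open Scope ring_scope.

Section real_inequalities.
Context {R : realType}.

Lemma normrM_le_sqrD (a b : R) : `|a * b| <= a * a + b * b.
Proof. by rewrite ler_norml; apply/andP; split; nra. Qed.

Lemma sqr_le_quartic_mean (M a b : R) : 0 < M -> M <= `|a| ->
  b ^+ 2 <= (b ^+ 4 + a ^+ 4) / (2 * M ^+ 2).
Proof.
move=> M0 Ma; rewrite ler_pdivlMr ?mulr_gt0 ?exprn_gt0 //.
have Ma2 : M ^+ 2 <= a ^+ 2.
  by rewrite -[a ^+ 2]real_normK ?num_real // ler_sqr ?nnegrE // ltW.
have := sqr_ge0 (a ^+ 2 - b ^+ 2); have := sqr_ge0 b; nra.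
Qed.

Lemma sqr_le_expR (z : R) : 0 <= z -> z ^+ 2 <= 4 * expR z.
Proof.
move=> z0; have ez : expR z = expR (z / 2) ^+ 2 by rewrite -expRM_natr; congr expR; field.
by rewrite ez; have := expR_ge1Dx (z / 2); nra.
Qed.

End real_inequalities.

Section logistic_weight.
Context {R : realType}.

Definition logistic_weight (t : R) : R := sigmoid t * (1 - sigmoid t).

Lemma logistic_weightE t :
  logistic_weight t = expR (- t) / (1 + expR (- t)) ^+ 2.
Proof.
have e0 := expR_gt0 (- t).
rewrite /logistic_weight /sigmoid; field.
by rewrite gt_eqF // ltr_wpDr // ltW.
Qed.

Lemma logistic_weightN t : logistic_weight (- t) = logistic_weight t.
Proof.
have e0 := expR_gt0 t.
rewrite !logistic_weightE opprK expRN; field.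
by rewrite !gt_eqF // addr_gt0.
Qed.

Lemma logistic_weight_norm t : logistic_weight `|t| = logistic_weight t.
Proof.
by have [t0|t0] := leP 0 t; rewrite ?(ger0_norm t0) ?(ltr0_norm t0) ?logistic_weightN.
Qed.

Lemma logistic_weight_ge0 t : 0 <= logistic_weight t.
Proof. by rewrite logistic_weightE divr_ge0 ?sqr_ge0 // ltW ?expR_gt0. Qed.

Lemma logistic_weight_le t : logistic_weight t <= 4^-1.
Proof.
have e0 := expR_gt0 (- t).
rewrite logistic_weightE ler_pdivrMr ?exprn_gt0 ?addr_gt0 //.
by have := sqr_ge0 (1 - expR (- t)); nra.
Qed.

Lemma logistic_weight_ge t : expR (- `|t|) / 4 <= logistic_weight t.
Proof.
rewrite -logistic_weight_norm logistic_weightE.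
have e0 := expR_gt0 (- `|t|).
have e1 : expR (- `|t|) <= 1 by rewrite expR_le1 oppr_le0.
rewrite ler_pM2l // lef_pV2 ?posrE ?exprn_gt0 ?addr_gt0 //; nra.
Qed.

Lemma continuous_sigmoid : continuous (@sigmoid R).
Proof.
move=> x; apply: (continuousM (s := cst 1) (t := fun z => (1 + expR (- z))^-1)).
  exact: cst_continuous.
apply: continuousV; first by rewrite gt_eqF // ltr_pwDr ?expR_gt0.
apply: continuousD; first exact: cst_continuous.
apply: (continuous_comp (f := -%R)); [exact: continuousN | exact: continuous_expR].
Qed.

Lemma measurable_logistic_weight : measurable_fun setT logistic_weight.
Proof.
apply: continuous_measurable_fun => x.
apply: continuousM; first exact: continuous_sigmoid.
by apply: continuousB; [exact: cst_continuous | exact: continuous_sigmoid].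
Qed.

Lemma logistic_weight_mul_sqr_ge (M s a b : R) : 0 < M -> 0 <= s ->
  expR (- (M * s)) / 4 * (b ^+ 2 - (b ^+ 4 + a ^+ 4) / (2 * M ^+ 2))
    <= logistic_weight (s * a) * b ^+ 2.
Proof.
move=> M0 s0; have E0 := expR_gt0 (- (M * s)).
have b2 := sqr_ge0 b; have w0 := logistic_weight_ge0 (s * a).
have [aM|/ltW Ma] := lerP `|a| M.
  have wE : expR (- (M * s)) / 4 <= logistic_weight (s * a).
    apply: le_trans (logistic_weight_ge _).
    rewrite ler_pM2r // ler_expR lerN2 normrM (ger0_norm s0) mulrC.
    exact: ler_wpM2r.
  have q0 : 0 <= (b ^+ 4 + a ^+ 4) / (2 * M ^+ 2).
    by rewrite divr_ge0 ?addr_ge0 ?exprn_even_ge0 // mulr_ge0 // sqr_ge0.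
  nra.
have := sqr_le_quartic_mean b M0 Ma; nra.
Qed.

End logistic_weight.

Section euclidean.
Context {R : realType} {d : nat}.
Implicit Types (u v x : 'I_d -> R) (A B : 'M[R]_d).

Definition quadform A v : R := \sum_(j < d) \sum_(k < d) v j * A j k * v k.

Lemma quadformB A B v : quadform (A - B) v = quadform A v - quadform B v.
Proof.
rewrite /quadform -sumrB; apply: eq_bigr => j _.
by rewrite -sumrB; apply: eq_bigr => k _; rewrite !mxE; ring.
Qed.

Lemma quadform_scalar c v : quadform (c *: 1%:M) v = c * dotv v v.
Proof.
rewrite /quadform /dotv mulr_sumr; apply: eq_bigr => j _.
rewrite (bigD1 j) //= big1 => [|k /negbTE kj]; last by rewrite !mxE eq_sym kj mulr0 mulr0 mul0r.
by rewrite !mxE eqxx mulr1 addr0 mulrCA mulrA.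
Qed.

Lemma quadform_sum_outer n (c : 'I_n -> R) (x : 'I_n -> 'I_d -> R) v :
  quadform (\matrix_(j, k) \sum_(i < n) c i * x i j * x i k) v =
  \sum_(i < n) c i * dotv v (x i) ^+ 2.
Proof.
rewrite /quadform; under eq_bigr do under eq_bigr do rewrite mxE mulr_sumr mulr_suml.
under eq_bigr do rewrite exchange_big /=.
rewrite exchange_big /=; apply: eq_bigr => i _.
rewrite /dotv expr2 !mulr_sumr; apply: eq_bigr => j _.
rewrite mulr_suml mulr_sumr; apply: eq_bigr => k _; ring.
Qed.

Lemma quadform_outer x v : quadform (\matrix_(j, k) (x j * x k)) v = dotv v x ^+ 2.
Proof.
rewrite /quadform /dotv expr2 mulr_suml; apply: eq_bigr => j _.
by rewrite mulr_sumr; apply: eq_bigr => k _; rewrite mxE; ring.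
Qed.

Lemma dotv_ge0 v : 0 <= dotv v v.
Proof. by apply: sumr_ge0 => j _; rewrite -expr2 sqr_ge0. Qed.

Lemma norm2_ge0 v : 0 <= norm2 v.
Proof. exact: sqrtr_ge0. Qed.

Lemma sqr_norm2 v : norm2 v ^+ 2 = dotv v v.
Proof. by rewrite sqr_sqrtr // dotv_ge0. Qed.

Lemma norm2_eq0_dotv v x : norm2 v = 0 -> dotv v x = 0.
Proof.
move=> v0; have sq0 i : true -> 0 <= v i * v i by rewrite -expr2 sqr_ge0.
have /(psumr_eq0P sq0) vv0 : dotv v v = 0 by rewrite -sqr_norm2 v0 expr0n.
rewrite /dotv big1 // => j _.
by move: (vv0 j isT) => /eqP; rewrite mulf_eq0 orbb => /eqP ->; rewrite mul0r.
Qed.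

Definition normalize v : 'I_d -> R := fun j => v j / norm2 v.

Lemma dotv_normalize v x : dotv (normalize v) x = dotv v x / norm2 v.
Proof. by rewrite /dotv mulr_suml; apply: eq_bigr => j _; rewrite mulrAC. Qed.

(* Also for [norm2 v = 0], where [normalize v] is the zero vector since x / 0 = 0. *)
Lemma norm2_mul_dotv_normalize v x : norm2 v * dotv (normalize v) x = dotv v x.
Proof.
rewrite dotv_normalize; have [v0|v0] := eqVneq (norm2 v) 0.
  by rewrite v0 mul0r norm2_eq0_dotv.
by rewrite mulrC divfK.
Qed.

Lemma norm2_normalize v : norm2 v != 0 -> norm2 (normalize v) = 1.
Proof.
move=> v0; rewrite [LHS]/norm2.
have -> : dotv (normalize v) (normalize v) = dotv v v / norm2 v ^+ 2.
  by rewrite /dotv mulr_suml; apply: eq_bigr => j _; rewrite /normalize; field.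
by rewrite -sqr_norm2 divff ?sqrtr1 // sqrf_eq0.
Qed.

End euclidean.

Section real_integrals.
Context {dT : measure_display} {T : measurableType dT} {R : realType}
  (mu : {measure set T -> \bar R}).
Implicit Types f g : T -> R.

Lemma integrableZl_EFin c f : mu.-integrable setT (EFin \o f) ->
  mu.-integrable setT (EFin \o (fun w => c * f w)).
Proof. exact: integrableZl. Qed.

Lemma integrableZr_EFin c f : mu.-integrable setT (EFin \o f) ->
  mu.-integrable setT (EFin \o (fun w => f w * c)).
Proof. exact: integrableZr. Qed.

Lemma integrableD_EFin f g : mu.-integrable setT (EFin \o f) ->
  mu.-integrable setT (EFin \o g) ->
  mu.-integrable setT (EFin \o (fun w => f w + g w)).
Proof. exact: integrableD. Qed.

Lemma integrableB_EFin f g : mu.-integrable setT (EFin \o f) ->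
  mu.-integrable setT (EFin \o g) ->
  mu.-integrable setT (EFin \o (fun w => f w - g w)).
Proof. exact: integrableB. Qed.

Lemma integrable_sum_EFin (I : Type) (s : seq I) (F : I -> T -> R) :
  (forall i, mu.-integrable setT (EFin \o F i)) ->
  mu.-integrable setT (EFin \o (fun w => \sum_(i <- s) F i w)).
Proof.
move=> iF; apply: (@eq_integrable _ _ _ _ _ _ (fun w => \sum_(i <- s) (F i w)%:E)) => //.
- by move=> w _ /=; rewrite sumEFin.
- by apply: integrable_sum => // i _; exact: iF.
Qed.

Lemma Rintegral_sum (I : Type) (s : seq I) (F : I -> T -> R) :
  (forall i, mu.-integrable setT (EFin \o F i)) ->
  Rintegral mu setT (fun w => \sum_(i <- s) F i w) =
  \sum_(i <- s) Rintegral mu setT (F i).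
Proof.
move=> iF; elim: s => [|i s IHs].
  under eq_fun do rewrite big_nil.
  by rewrite big_nil Rintegral_cst // mul0r.
under eq_fun do rewrite big_cons.
by rewrite RintegralD ?big_cons ?IHs //; exact: integrable_sum_EFin.
Qed.

Lemma le_integrable_EFin f g : measurable_fun setT f ->
  mu.-integrable setT (EFin \o g) -> (forall w, `|f w| <= `|g w|) ->
  mu.-integrable setT (EFin \o f).
Proof.
move=> mf ig fg; apply: le_integrable ig => //; first exact/measurable_EFinP.
by move=> w _; rewrite lee_fin.
Qed.

Lemma integrable_mul_of_sqr f g : measurable_fun setT f -> measurable_fun setT g ->
  mu.-integrable setT (EFin \o (fun w => f w * f w)) ->
  mu.-integrable setT (EFin \o (fun w => g w * g w)) ->
  mu.-integrable setT (EFin \o (fun w => f w * g w)).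
Proof.
move=> mf mg iff igg.
apply: (@le_integrable_EFin _ (fun w => f w * f w + g w * g w)).
- exact: measurable_funM.
- exact: integrableD_EFin.
- move=> w; rewrite [leRHS]ger0_norm ?addr_ge0 -?expr2 ?sqr_ge0 // !expr2.
  exact: normrM_le_sqrD.
Qed.

Lemma ge0_integrable_EFin f r : measurable_fun setT f -> (forall w, 0 <= f w) ->
  (\int[mu]_w (f w)%:E <= r%:E)%E -> mu.-integrable setT (EFin \o f).
Proof.
move=> mf f0 fr; apply/integrableP; split; first exact/measurable_EFinP.
rewrite (eq_integral (fun w => (f w)%:E)) => [|w _]; last by rewrite /= ger0_norm.
exact: le_lt_trans fr (ltry _).
Qed.

Lemma ge0_Rintegral_le f r : (forall w, 0 <= f w) ->
  (\int[mu]_w (f w)%:E <= r%:E)%E -> Rintegral mu setT f <= r.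
Proof.
move=> f0 fr; have If0 : (0 <= \int[mu]_w (f w)%:E)%E.
  by apply: integral_ge0 => w _; rewrite lee_fin.
by rewrite -lee_fin /Rintegral fineK // ge0_fin_numE // (le_lt_trans fr (ltry _)).
Qed.

Section quadform_integral.
Variables (d : nat) (F : 'I_d -> 'I_d -> T -> R) (v : 'I_d -> R).
Hypothesis iF : forall j k, mu.-integrable setT (EFin \o F j k).

Let integrable_entry j k :
  mu.-integrable setT (EFin \o (fun w => v j * F j k w * v k)).
Proof. exact/integrableZr_EFin/integrableZl_EFin. Qed.

Lemma integrable_quadform :
  mu.-integrable setT (EFin \o (fun w => quadform (\matrix_(j, k) F j k w) v)).
Proof.
rewrite /quadform; under eq_fun do under eq_bigr do under eq_bigr do rewrite mxE.
by do 2 apply: integrable_sum_EFin => ?.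
Qed.

Lemma Rintegral_quadform :
  quadform (\matrix_(j, k) Rintegral mu setT (F j k)) v =
  Rintegral mu setT (fun w => quadform (\matrix_(j, k) F j k w) v).
Proof.
rewrite /quadform.
under [RHS]eq_Rintegral do under eq_bigr do under eq_bigr do rewrite mxE.
rewrite Rintegral_sum => [|j]; last exact: integrable_sum_EFin.
apply: eq_bigr => j _; rewrite Rintegral_sum //; apply: eq_bigr => k _.
rewrite mxE (RintegralZr _ (f := fun w => v j * F j k w)) //; last exact: integrableZl_EFin.
by rewrite RintegralZl.
Qed.

End quadform_integral.

Lemma integrable_logistic_weightMl (A g : T -> R) : measurable_fun setT A ->
  mu.-integrable setT (EFin \o g) ->
  mu.-integrable setT (EFin \o (fun w => logistic_weight (A w) * g w)).
Proof.
move=> mA ig; apply: (le_integrable_EFin _ ig) => [|w].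
  apply: measurable_funM; first exact: measurableT_comp measurable_logistic_weight mA.
  by have /integrableP[/measurable_EFinP] := ig.
rewrite normrM ger0_norm ?logistic_weight_ge0 // ler_piMl //.
by apply: le_trans (logistic_weight_le _) _; lra.
Qed.

Lemma Rintegral_logistic_weight_mul_sqr_ge (M s : R) (A B : T -> R) :
  0 < M -> 0 <= s ->
  measurable_fun setT A ->
  mu.-integrable setT (EFin \o (fun w => B w ^+ 2)) ->
  Rintegral mu setT (fun w => B w ^+ 2) = 1 ->
  mu.-integrable setT (EFin \o (fun w => B w ^+ 4)) ->
  Rintegral mu setT (fun w => B w ^+ 4) <= M ^+ 2 / 2 ->
  mu.-integrable setT (EFin \o (fun w => A w ^+ 4)) ->
  Rintegral mu setT (fun w => A w ^+ 4) <= M ^+ 2 / 2 ->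
  expR (- (M * s)) / 8 <=
  Rintegral mu setT (fun w => logistic_weight (s * A w) * B w ^+ 2).
Proof.
move=> M0 s0 mA iB2 B2 iB4 B4 iA4 A4.
set c := expR (- (M * s)) / 4; set k := c / (2 * M ^+ 2).
have c0 : 0 < c by rewrite divr_gt0 ?expR_gt0.
have M2 : 0 < M ^+ 2 by rewrite exprn_gt0.
have k0 : 0 < k by rewrite divr_gt0 // mulr_gt0.
have kM : k * M ^+ 2 = c / 2 by rewrite /k; field; rewrite gt_eqF.
pose g w := c * B w ^+ 2 - k * (B w ^+ 4 + A w ^+ 4).
have ig : mu.-integrable setT (EFin \o g).
  exact/integrableB_EFin/integrableZl_EFin/integrableD_EFin/iA4/iB4/integrableZl_EFin.
have -> : expR (- (M * s)) / 8 = c / 2 by rewrite /c; field.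
apply: (@le_trans _ _ (Rintegral mu setT g)).
  rewrite /g RintegralB //; last 2 first.
  - exact: integrableZl_EFin.
  - exact/integrableZl_EFin/integrableD_EFin.
  rewrite !RintegralZl ?RintegralD //; last exact: integrableD_EFin.
  rewrite B2 mulr1.
  have : k * (Rintegral mu setT (fun w => B w ^+ 4) + Rintegral mu setT (fun w => A w ^+ 4)) <= c / 2.
    by rewrite -kM ler_pM2l //; lra.
  lra.
apply: le_Rintegral => // [|w _].
  by apply: integrable_logistic_weightMl => //; exact: measurable_funM.
rewrite [leLHS](_ : _ = c * (B w ^+ 2 - (B w ^+ 4 + A w ^+ 4) / (2 * M ^+ 2))).
  exact: logistic_weight_mul_sqr_ge.
by rewrite /g /k; field; rewrite gt_eqF.
Qed.

End real_integrals.

Section random_vector_moments.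
Context {dT : measure_display} {T : measurableType dT} {R : realType}
  (P : probability T R) {d : nat} (Y : T -> 'I_d -> R) (K : R).
Hypotheses (Yrv : random_vector Y) (Ycov : cov_identity P Y)
  (K0 : 0 < K) (YK : subgaussian P K Y).

Lemma expectation_integral (f : T -> R) :
  ('E_P[f] = \int[P]_w (f w)%:E)%E.
Proof. by rewrite unlock. Qed.

Lemma measurable_dotv u : measurable_fun setT (fun w => dotv u (Y w)).
Proof.
apply: measurable_sum => j.
by apply: measurable_funM => //; exact: measurable_cst.
Qed.

Lemma integrable_coord_mul j k :
  P.-integrable setT (EFin \o (fun w => Y w j * Y w k)).
Proof.
have sq i : P.-integrable setT (EFin \o (fun w => Y w i * Y w i)).
  apply: (ge0_integrable_EFin (r := 1)) => [|w|]; last 2 first.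
  - by rewrite -expr2 sqr_ge0.
  - by rewrite -expectation_integral Ycov eqxx.
  exact: measurable_funM.
exact: integrable_mul_of_sqr.
Qed.

Lemma integrable_dotv_sqr u :
  P.-integrable setT (EFin \o (fun w => dotv u (Y w) ^+ 2)).
Proof.
under eq_fun do rewrite -quadform_outer.
by apply: integrable_quadform => j k; exact: integrable_coord_mul.
Qed.

Lemma Rintegral_dotv_sqr u :
  Rintegral P setT (fun w => dotv u (Y w) ^+ 2) = dotv u u.
Proof.
under eq_Rintegral do rewrite -quadform_outer.
rewrite -Rintegral_quadform => [|j k]; last exact: integrable_coord_mul.
rewrite -[dotv u u]mul1r -quadform_scalar; congr quadform; apply/matrixP => j k.
by rewrite !mxE /Rintegral -expectation_integral Ycov mul1r.
Qed.

Lemma integral_dotv4_le u : norm2 u = 1 ->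
  (\int[P]_w (dotv u (Y w) ^+ 4)%:E <= (8 * K ^+ 4)%:E)%E.
Proof.
move=> u1; have K2 : 0 < K ^+ 2 by rewrite exprn_gt0.
pose E w := expR (dotv u (Y w) ^+ 2 / K ^+ 2).
have mE : measurable_fun setT E.
  apply: measurableT_comp => //; apply: measurable_funM => //.
  exact/measurable_funX/measurable_dotv.
have E2 : (\int[P]_w (E w)%:E <= 2%:E)%E by rewrite -expectation_integral; exact: YK.
have Y4E w : dotv u (Y w) ^+ 4 <= 4 * K ^+ 4 * E w.
  have := sqr_le_expR (divr_ge0 (sqr_ge0 (dotv u (Y w))) (ltW K2)).
  rewrite expr_div_n -!exprM ler_pdivrMr ?exprn_gt0 //.
  by rewrite mulrAC.
have K4 : 0 <= 4 * K ^+ 4 by rewrite mulr_ge0 // ltW // exprn_gt0.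
have mEe : measurable_fun setT (EFin \o E) by exact/measurable_EFinP.
have E0 w : setT w -> (0 <= (E w)%:E)%E by rewrite lee_fin ltW ?expR_gt0.
apply: (@le_trans _ _ (\int[P]_w ((4 * K ^+ 4)%:E * (E w)%:E))%E).
  apply: ge0_le_integral => // [w _|||w _].
  - by rewrite lee_fin exprn_even_ge0.
  - exact/measurable_EFinP/measurable_funX/measurable_dotv.
  - exact: emeasurable_funM.
  - by rewrite -EFinM lee_fin.
rewrite ge0_integralZl_EFin // (_ : 8 * K ^+ 4 = 4 * K ^+ 4 * 2); last by ring.
by rewrite (EFinM (4 * K ^+ 4)) lee_wpmul2l // lee_fin.
Qed.

Lemma integral_dotv_normalize4_le u :
  (\int[P]_w (dotv (normalize u) (Y w) ^+ 4)%:E <= (8 * K ^+ 4)%:E)%E.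
Proof.
have [u0|u0] := eqVneq (norm2 u) 0; last exact/integral_dotv4_le/norm2_normalize.
under eq_integral => w _ do rewrite dotv_normalize u0 invr0 mulr0 expr0n.
by rewrite integral0 lee_fin mulr_ge0 // ltW // exprn_gt0.
Qed.

Lemma Rintegral_logistic_weight_dotv_sqr_ge alpha v :
  norm2 v ^+ 2 * expR (- (4 * K ^+ 2 * norm2 alpha)) / 8 <=
  Rintegral P setT (fun w => logistic_weight (dotv alpha (Y w)) * dotv v (Y w) ^+ 2).
Proof.
have [v0|v0] := eqVneq (norm2 v) 0.
  rewrite v0 expr0n !mul0r; apply: Rintegral_ge0 => w _.
  by rewrite mulr_ge0 ?logistic_weight_ge0 ?sqr_ge0.
have M0 : 0 < 4 * K ^+ 2 by rewrite mulr_gt0 ?exprn_gt0.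
have moment4 u :
    P.-integrable setT (EFin \o (fun w => dotv (normalize u) (Y w) ^+ 4)) /\
    Rintegral P setT (fun w => dotv (normalize u) (Y w) ^+ 4) <= (4 * K ^+ 2) ^+ 2 / 2.
  have -> : (4 * K ^+ 2) ^+ 2 / 2 = 8 * K ^+ 4 by field.
  have Y4 w : 0 <= dotv (normalize u) (Y w) ^+ 4 by rewrite exprn_even_ge0.
  split; last exact: ge0_Rintegral_le (integral_dotv_normalize4_le u).
  apply: ge0_integrable_EFin (integral_dotv_normalize4_le u) => //.
  exact/measurable_funX/measurable_dotv.
have [iA4 A4] := moment4 alpha; have [iB4 B4] := moment4 v.
have B2 : Rintegral P setT (fun w => dotv (normalize v) (Y w) ^+ 2) = 1.
  by rewrite Rintegral_dotv_sqr -sqr_norm2 norm2_normalize // expr1n.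
have := Rintegral_logistic_weight_mul_sqr_ge M0 (norm2_ge0 alpha)
  (measurable_dotv _) (integrable_dotv_sqr _) B2 iB4 B4 iA4 A4.
move=> /(ler_wpM2l (sqr_ge0 (norm2 v))).
rewrite mulrA -RintegralZl //; last first.
  exact/integrable_logistic_weightMl/integrable_dotv_sqr/measurable_funM/measurable_dotv.
by under eq_Rintegral do rewrite mulrCA -exprMn !norm2_mul_dotv_normalize.
Qed.

End random_vector_moments.

Section expected_hessian.
Context {dT : measure_display} {T : measurableType dT} {R : realType}
  (P : probability T R) {n d : nat} (X : 'I_n -> T -> 'I_d -> R).
Hypotheses (Xrv : forall i, random_vector (X i))
  (Xcov : forall i, cov_identity P (X i)).

Lemma quadform_expected_hessian alpha v :
  quadform (expected_hessian P X alpha) v =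
  \sum_(i < n) Rintegral P setT
    (fun w => logistic_weight (dotv alpha (X i w)) * dotv v (X i w) ^+ 2).
Proof.
pose F j k w := \sum_(i < n) logistic_weight (dotv alpha (X i w)) * X i w j * X i w k.
have iF j k : P.-integrable setT (EFin \o F j k).
  apply: integrable_sum_EFin => i; under eq_fun do rewrite -mulrA.
  apply: integrable_logistic_weightMl; first exact: measurable_dotv.
  exact: integrable_coord_mul.
have -> : expected_hessian P X alpha = \matrix_(j, k) Rintegral P setT (F j k).
  apply/matrixP => j k; rewrite !mxE expectation_integral; congr fine.
  by apply: eq_integral => w _; rewrite mxE.
rewrite Rintegral_quadform // -Rintegral_sum => [|i]; last first.
  apply: integrable_logistic_weightMl; first exact: measurable_dotv.
  exact: integrable_dotv_sqr.
by under eq_Rintegral do rewrite quadform_sum_outer.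
Qed.

End expected_hessian.

Unset Implicit Arguments.

Theorem mainTheorem18 (R : realType) (K : R) (hK : 0 < K) :
  exists c C : R, 0 < c /\ 0 < C /\
  forall (dT : measure_display) (T : measurableType dT)
         (P : probability T R) (n d : nat) (X : 'I_n -> T -> 'I_d -> R),
    iid_rvecs P X ->
    (forall i, mean_zero P (X i)) ->
    (forall i, cov_identity P (X i)) ->
    (forall i, subgaussian P K (X i)) ->
    forall alpha : 'I_d -> R,
      loewner_ge (expected_hessian P X alpha)
                 ((n%:R * c * expR (- (C * norm2 alpha))) *: 1%:M).
Proof.
exists (1 / 8), (4 * K ^+ 2); split; first lra.
split; first by rewrite mulr_gt0 // exprn_gt0.
move=> dT T P n d X [Xrv _] _ Xcov XK alpha v.
rewrite -/(quadform _ v) quadformB quadform_scalar quadform_expected_hessian // subr_ge0.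
rewrite -sqr_norm2 (_ : _ * _ =
    \sum_(i < n) norm2 v ^+ 2 * expR (- (4 * K ^+ 2 * norm2 alpha)) / 8).
  by apply: ler_sum => i _; exact: Rintegral_logistic_weight_dotv_sqr_ge.
by rewrite sumr_const card_ord -mulr_natl; ring.
Qed.
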